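(* Let $n\ge 3$ and $k\ge 1$. Let $G=C_n$ be the cycle $g_1g_2\cdots g_ng_1$ and let $H=C_{3k+1}$ have vertex set $\{1,2,\dots,3k+1\}$ with $i$ adjacent to $i+1$ for $1\le i\le 3k$ and $3k+1$ adjacent to $1$. Define $f\colon V(G)\to V(H)$ by $f(g_i)=1$ if $i\bmod 4\in\{1,2\}$ and $f(g_i)=3$ otherwise ($i\in\{1,\dots,n\}$). Then \[ \gamma(G\otimes_f H)\le kn+\left\lceil \frac n4\right\rceil-\left\lfloor \frac n4\right\rfloor . \]
   Context: $\gamma$ denotes the domination number. For graphs $G,H$ and a function $f\colon V(G)\to V(H)$, the Sierpiński product $G\otimes_f H$ is the graph with vertex set $V(G)\times V(H)$ and edges of two types: (type 1) $(g,h)(g,h')$ for every $g\in V(G)$ and every edge $hh'\in E(H)$; (type 2) $(g,f(g'))(g',f(g))$ for every edge $gg'\in E(G)$. *)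

From mathcomp Require Import all_boot.
Set Implicit Arguments. Unset Strict Implicit. Unset Printing Implicit Defensive.

(* Graphs are given as (symmetric, irreflexive) relations on finite types. *)

Definition dominating (T : finType) (e : rel T) (D : {set T}) : bool :=
  [forall x, (x \in D) || [exists y in D, e y x]].

(* Domination number: minimum size of a dominating set
   (setT is always dominating, so the default #|T| does not distort the min). *)
Definition domination_number (T : finType) (e : rel T) : nat :=
  \big[minn/#|T|]_(D : {set T} | dominating e D) #|D|.

(* Cycle C_n on 'I_n: i adjacent to (i+1) mod n. Vertex i stands for g_(i+1). *)
Definition cycle_rel (n : nat) : rel 'I_n :=
  fun i j => (nat_of_ord j == i.+1 %% n) || (nat_of_ord i == j.+1 %% n).

Definition sierpinski_rel (TG TH : finType) (eG : rel TG) (eH : rel TH)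
  (f : TG -> TH) : rel (TG * TH) :=
  fun x y =>
    ((x.1 == y.1) && eH x.2 y.2)
    || [&& eG x.1 y.1, x.2 == f y.1 & y.2 == f x.1].

(* The function f of the statement: ordinal i : 'I_n is g_(i+1); H-vertex
   j : 'I_(3k+1) is vertex j+1, so H-vertex 1 is ordinal 0 and 3 is ordinal 2. *)
Definition f_map (n k : nat) (i : 'I_n) : 'I_(3 * k).+1 :=
  if (i.+1 %% 4 == 1) || (i.+1 %% 4 == 2) then inord 0 else inord 2.

From mathcomp Require Import all_boot order zify.
From mathcomp Require Import zmodp.
Import Order.TTheory.

Set Implicit Arguments.
Unset Strict Implicit.
Unset Printing Implicit Defensive.

(* In copy [g] of [C_(3k+1)], the [k] vertices [b_g + 2], [b_g + 5], ...,
   [b_g + 3k - 1] dominate everything except [b_g], where [b_g = f(g+1)] is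
   the endpoint of the type-2 edge towards the next copy.  That edge lands on
   [(g+1, f g)], and since [f(g+2) = 2 - f g] the vertex [f g] is [b_(g+1) + 2]
   or [b_(g+1) - 2], hence was chosen in copy [g+1].  So [k] vertices per copy
   suffice, except at the wrap-around from [g_n] to [g_1], which costs one
   extra vertex unless [4] divides [n] and the pattern of [f] is periodic. *)

Lemma domination_number_le (T : finType) (e : rel T) (D : {set T}) :
  dominating e D -> domination_number e <= #|D|.
Proof.
move=> domD; rewrite /domination_number -minEnat.
exact: (bigmin_le_cond _ (fun D : {set T} => #|D|) domD).
Qed.

Section SierpinskiDomination.

Variables (TG TH : finType) (eG : rel TG) (eH : rel TH) (f : TG -> TH).
Variables (b : TG -> TH) (D : TG -> {set TH}) (E : {set TG}).

Definition sierpinski_dom_set : {set TG * TH} :=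
  [set x | x.2 \in D x.1] :|: [set (g, b g) | g in E].

Lemma card_sierpinski_dom_set :
  #|sierpinski_dom_set| <= \sum_g #|D g| + #|E|.
Proof.
have -> : \sum_g #|D g| = #|[set x : TG * TH | x.2 \in D x.1]|.
  rewrite -sum1_card; under eq_bigr do rewrite -sum1_card.
  by rewrite pair_big_dep; apply: eq_bigl => -[g h]; rewrite inE.
exact: leq_trans (leq_card_setU _ _) (leq_add (leqnn _) (leq_imset_card _ _)).
Qed.

Hypothesis D_dominates :
  forall g h, h != b g -> (h \in D g) || [exists y in D g, eH y h].
Hypothesis b_dominated :
  forall g, g \notin E -> exists2 g', eG g' g & (f g' == b g) && (f g \in D g').

Lemma sierpinski_dom_set_dominating :
  dominating (sierpinski_rel eG eH f) sierpinski_dom_set.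
Proof.
apply/forallP => -[g h]; rewrite !inE /=.
have [-> | hNb] := eqVneq h (b g); last first.
  case/orP: (D_dominates hNb) => [-> // | /exists_inP [y yD eH_yh]].
  apply/orP; right; apply/exists_inP; exists (g, y); first by rewrite !inE yD.
  by rewrite /sierpinski_rel /= eqxx eH_yh.
have [gE | /b_dominated [g' eG_g'g /andP [f_g' f_gD]]] := boolP (g \in E).
  by rewrite imset_f ?orbT.
apply/orP; right; apply/exists_inP; exists (g', f g); first by rewrite !inE f_gD.
by rewrite /sierpinski_rel /= eG_g'g (eqP f_g') !eqxx orbT.
Qed.

End SierpinskiDomination.

Lemma cycle_relE m (i j : 'I_m) :
  cycle_rel i j = [|| j == i.+1 :> nat, i == j.+1 :> nat,
                      (i == m.-1 :> nat) && (j == 0 :> nat)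
                    | (j == m.-1 :> nat) && (i == 0 :> nat)].
Proof.
have modS (x : 'I_m) : x.+1 %% m = if x.+1 < m then x.+1 else 0.
  case: ltnP => [/modn_small // | ge]; have -> : x.+1 = m by have := ltn_ord x; lia.
  exact: modnn.
rewrite /cycle_rel !modS; have := ltn_ord i; have := ltn_ord j.
by case: (ltnP i.+1 m); case: (ltnP j.+1 m); lia.
Qed.

Definition stride_set k (b : nat) : {set 'I_(3 * k).+1} :=
  [set inZp (b + 3 * t + 2) | t : 'I_k].

Lemma card_stride_set k b : #|stride_set k b| <= k.
Proof. by rewrite (leq_trans (leq_imset_card _ _)) ?card_ord. Qed.

Lemma stride_set_dominates k b (j : 'I_(3 * k).+1) : j != inZp b ->
  (j \in stride_set k b) || [exists y in stride_set k b, cycle_rel y j].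
Proof.
have inZp_mod x : inZp (b %% (3 * k).+1 + x) = inZp (b + x) :> 'I_(3 * k).+1.
  by apply: val_inj; rewrite /= modnDml.
have -> : stride_set k b = stride_set k (b %% (3 * k).+1).
  by apply: eq_imset => t; rewrite -!addnA inZp_mod.
have -> : inZp b = inZp (b %% (3 * k).+1) :> 'I_(3 * k).+1.
  by apply: val_inj; rewrite /= modn_mod.
have : b %% (3 * k).+1 < (3 * k).+1 by rewrite ltn_mod.
move: (b %% _) => {inZp_mod}b lt_b; rewrite -val_eqE /= modn_small // => jNb.
have lt_j := ltn_ord j.
(* [j] lies at distance [d] in [1, 3k] after [b]; the chosen vertex at
   distance [3t + 2] with [t = (d - 1) / 3] is within one step of it. *)
pose d := if b <= j then j - b else j + (3 * k).+1 - b.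
have [t t_def] : exists t : 'I_k, t = (d - 1) %/ 3 :> nat.
  have lt_t : (d - 1) %/ 3 < k by rewrite /d; case: (leqP b j); lia.
  by exists (Ordinal lt_t).
set s := b + 3 * t + 2.
have y_val : (inZp s : 'I_(3 * k).+1)
             = (if s < (3 * k).+1 then s else s - (3 * k).+1) :> nat.
  rewrite /=; case: ltnP => [/modn_small // | le_ms].
  rewrite -[in LHS](subnK le_ms) modnDr modn_small //.
  by have := ltn_ord t; rewrite /s; lia.
have y_in : inZp s \in stride_set k b by apply: imset_f.
case: (eqVneq j (inZp s)) => [-> | jNy]; first by rewrite y_in.
apply/orP; right; apply/exists_inP; exists (inZp s) => //.
move: jNy; rewrite cycle_relE -(inj_eq (@ord_inj _)) !y_val /s t_def /d.
by case: (leqP b j); case: ifPn; lia.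
Qed.

Lemma stride_set_opposite k (a : 'I_(3 * k).+1) : 0 < k ->
  (a == 0 :> nat) || (a == 2 :> nat) -> a \in stride_set k (2 - a).
Proof.
move=> k_gt0 /orP [] /eqP a_val; apply/imsetP.
  have lt_t : k.-1 < k by lia.
  exists (Ordinal lt_t) => //; apply: val_inj => /=; rewrite a_val.
  have -> : 2 - 0 + 3 * k.-1 + 2 = (3 * k).+1 by lia.
  by rewrite modnn.
exists (Ordinal k_gt0) => //; apply: val_inj => /=; rewrite a_val.
by rewrite modn_small //; lia.
Qed.

Definition f_nat (i : nat) : nat :=
  if (i.+1 %% 4 == 1) || (i.+1 %% 4 == 2) then 0 else 2.

Lemma f_nat_cases i : (f_nat i == 0) || (f_nat i == 2).
Proof. by rewrite /f_nat; case: ifP. Qed.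

Lemma f_natSS i : f_nat i.+2 = 2 - f_nat i.
Proof. by rewrite /f_nat; case: ifP; case: ifP; lia. Qed.

Lemma f_nat_mod4 i j : i = j %[mod 4] -> f_nat i = f_nat j.
Proof. by move=> eq_ij; rewrite /f_nat; have -> : i.+1 %% 4 = j.+1 %% 4 by lia. Qed.

Lemma f_map_val n k (i : 'I_n) : 0 < k -> f_map k i = f_nat i :> nat.
Proof. by move=> k_gt0; rewrite /f_map /f_nat; case: ifP => _; rewrite inordK //; lia. Qed.

(* The copies [i] whose cyclic successor breaks the period-4 pattern of [f]. *)
Definition period4_defects n : {set 'I_n.+1} :=
  [set i : 'I_n.+1 | (inZp i.+1 : 'I_n.+1) != i.+1 %[mod 4]].

Lemma mem_period4_defects n (i : 'I_n.+1) :
  (i \in period4_defects n) = (i == n :> nat) && ~~ (4 %| n.+1).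
Proof.
rewrite inE /=; case: (ltnP i n) => [lt_in | ge_in].
  by rewrite (@modn_small i.+1) ?eqxx //; lia.
have i_n : nat_of_ord i = n by have := ltn_ord i; lia.
by rewrite i_n modnn; lia.
Qed.

Lemma card_period4_defects n :
  #|period4_defects n| <= (n.+1 + 3) %/ 4 - n.+1 %/ 4.
Proof.
have -> : period4_defects n = if 4 %| n.+1 then set0 else [set ord_max].
  apply/setP => i; rewrite mem_period4_defects.
  by case: ifP => div4; rewrite !inE -?val_eqE /= ?div4 ?andbF ?andbT.
by case: ifP; rewrite ?cards0 ?cards1; lia.
Qed.

Lemma succ_covers_blocked n k (i : 'I_n.+1) : 0 < k ->
  i \notin period4_defects n ->
  let j : 'I_n.+1 := inZp i.+1 in
  [&& cycle_rel j i, f_map k j == inZp (f_nat i.+1)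
    & f_map k i \in stride_set k (f_nat j.+1)].
Proof.
move=> k_gt0; rewrite inE negbK => /eqP succ_mod4.
rewrite /cycle_rel /= eqxx orbT /=; apply/andP; split.
  rewrite -(inj_eq (@ord_inj _)) f_map_val //= (f_nat_mod4 succ_mod4).
  by rewrite modn_small //; have := f_nat_cases i.+1; lia.
have succS_mod4 : (i.+1 %% n.+1).+1 = i.+2 %[mod 4].
  by rewrite -addn1 -modnDml succ_mod4 modnDml addn1.
rewrite (f_nat_mod4 succS_mod4) f_natSS -(f_map_val i k_gt0).
by apply: stride_set_opposite; rewrite ?f_map_val ?f_nat_cases.
Qed.

Theorem mainTheorem9 (n k : nat) (hn : 3 <= n) (hk : 1 <= k) :
  domination_number
    (sierpinski_rel (@cycle_rel n) (@cycle_rel (3 * k).+1) (@f_map n k))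
  <= k * n + (n + 3) %/ 4 - n %/ 4.
Proof.
case: n hn => [// | n] _.
pose b (i : 'I_n.+1) : 'I_(3 * k).+1 := inZp (f_nat i.+1).
pose D (i : 'I_n.+1) := stride_set k (f_nat i.+1).
have D_dominates i h : h != b i -> (h \in D i) || [exists y in D i, cycle_rel y h].
  exact: stride_set_dominates.
have b_dominated i : i \notin period4_defects n ->
    exists2 i', cycle_rel i' i & (f_map k i' == b i) && (f_map k i \in D i').
  move=> /(succ_covers_blocked hk) /and3P [cycle_succ f_succ f_in].
  by exists (inZp i.+1); rewrite ?f_succ.
apply: leq_trans (domination_number_le
  (sierpinski_dom_set_dominating D_dominates b_dominated)) _.
apply: leq_trans (card_sierpinski_dom_set _ _ _) _.
have sum_D : \sum_i #|D i| <= n.+1 * k.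
  apply: (@leq_trans (\sum_(i : 'I_n.+1) k)).
    by apply: leq_sum => i _; exact: card_stride_set.
  by rewrite sum_nat_const card_ord.
rewrite [k * _]mulnC -addnBA ?leq_div2r ?leq_addr //.
exact: leq_add sum_D (card_period4_defects n).
Qed.
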